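(* Let $m,n\in\mathbb{N}$, $T=\{1,\dots,m\}$, and let $\mathcal{F}:\mathbb{R}^{m\times n}\times\mathbb{R}^m\rightrightarrows\mathbb{R}^n$ be given by $\mathcal{F}(A,b)=\{x\in\mathbb{R}^n\mid Ax\le b\}$. Let $(\bar A,\bar b)$ satisfy $\mathcal{F}(\bar A,\bar b)\neq\emptyset$. Then $$\operatorname{Lipusc}\mathcal{F}(\bar A,\bar b)=\lim_{\delta\downarrow 0}\ \sup\left\{\frac{(\|x\|+1)\,\operatorname{dist}\big(x,\mathcal{F}(\bar A,\bar b)\big)}{\|(\bar Ax-\bar b)_+\|_\infty}\ \Bigg|\ x\in\mathbb{R}^n,\ \|(\bar Ax-\bar b)_+\|_\infty\le\delta(\|x\|+1)\right\},$$ where the limit exists in $[0,+\infty]$.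
   Context: $\mathbb{R}^n$ carries an arbitrary norm $\|\cdot\|$ with dual norm $\|u\|_*=\max_{\|x\|\le1}|u'x|$. $\mathbb{R}^m$ carries $\|b\|_\infty=\max_t|b_t|$. The parameter space $\mathbb{R}^{m\times n}\times\mathbb{R}^m$ carries the norm $\|(A,b)\|=\max_{t\in T}\max\{\|a_t\|_*,|b_t|\}$, where $a_t'$ is the $t$-th row of $A$. $(\bar Ax-\bar b)_+$ is the vector with components $\max\{\bar a_t'x-\bar b_t,0\}$. $\operatorname{dist}(x,\Omega)=\inf_{\omega\in\Omega}\|x-\omega\|$, with $\inf\emptyset=+\infty$; the convention $0/0:=0$ is used. For a set-valued map $\mathcal{M}:Y\rightrightarrows X$ between metric spaces and $\bar y$ with $\mathcal{M}(\bar y)\ne\emptyset$, the Lipschitz upper semicontinuity modulus $\operatorname{Lipusc}\mathcal{M}(\bar y)$ is the infimum of all $\kappa\ge0$ for which there is a neighborhood $V$ of $\bar y$ with $\operatorname{dist}(x,\mathcal{M}(\bar y))\le\kappa\operatorname{dist}(y,\bar y)$ for all $y\in V$ and all $x\in\mathcal{M}(y)$ (infimum of the empty set is $+\infty$). *)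

From HB Require Import structures.
From mathcomp Require Import all_boot all_order all_algebra.
From mathcomp Require Import all_classical all_reals all_analysis.
Set Implicit Arguments. Unset Strict Implicit. Unset Printing Implicit Defensive.
Import Order.TTheory GRing.Theory Num.Theory.
Local Open Scope classical_set_scope.
Local Open Scope ring_scope.

Section Defs.
Variables (R : realType) (m n : nat).

Definition is_norm (N : 'cV[R]_n -> R) : Prop :=
  (forall x, N x = 0 -> x = 0) /\
  (forall (c : R) x, N (c *: x) = `|c| * N x) /\
  (forall x y, N (x + y) <= N x + N y).

Definition dualnorm (N : 'cV[R]_n -> R) (u : 'rV[R]_n) : R :=
  sup [set `|(u *m x) 0 0| | x in [set x : 'cV[R]_n | N x <= 1]].

Definition param_norm (N : 'cV[R]_n -> R) (A : 'M[R]_(m, n)) (b : 'cV[R]_m) : R :=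
  \big[Num.max/0]_(t < m) Num.max (dualnorm N (row t A)) `|b t 0|.

Definition feas (A : 'M[R]_(m, n)) (b : 'cV[R]_m) : set 'cV[R]_n :=
  [set x | forall t : 'I_m, (A *m x) t 0 <= b t 0].

(* dist(x, Omega) = inf_{w in Omega} ||x - w||, inf of empty set = +oo *)
Definition distN (N : 'cV[R]_n -> R) (x : 'cV[R]_n) (Om : set 'cV[R]_n) : \bar R :=
  ereal_inf [set (N (x - w))%:E | w in Om].

Definition resid (A : 'M[R]_(m, n)) (b : 'cV[R]_m) (x : 'cV[R]_n) : R :=
  \big[Num.max/0]_(t < m) Num.max ((A *m x - b) t 0) 0.

Definition Lipusc_feas (N : 'cV[R]_n -> R) (Ab : 'M[R]_(m, n)) (bb : 'cV[R]_m) : \bar R :=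
  ereal_inf [set k%:E | k in [set k : R | 0 <= k /\
     exists2 eps : R, 0 < eps &
       forall (A : 'M[R]_(m, n)) (b : 'cV[R]_m),
         param_norm N (A - Ab) (b - bb) < eps ->
         forall x, feas A b x ->
           (distN N x (feas Ab bb) <= (k * param_norm N (A - Ab) (b - bb))%:E)%E]].

(* the quotient a / r in \bar R with the convention 0/0 := 0
   (for r = 0 we return 0) *)
Definition equot (a : \bar R) (r : R) : \bar R :=
  if r == 0 then 0%E else (a * (r^-1)%:E)%E.

Definition rhs_sup (N : 'cV[R]_n -> R) (Ab : 'M[R]_(m, n)) (bb : 'cV[R]_m) (d : R) : \bar R :=
  ereal_sup [set equot ((N x + 1)%:E * distN N x (feas Ab bb))%E (resid Ab bb x)
            | x in [set x : 'cV[R]_n | resid Ab bb x <= d * (N x + 1)]].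

End Defs.

From mathcomp Require Import all_boot all_order all_algebra.
From mathcomp Require Import all_classical all_reals all_analysis.
From mathcomp Require Import ring lra.
Import Order.TTheory GRing.Theory Num.Theory numFieldTopology.Exports.
Local Open Scope classical_set_scope.
Local Open Scope ring_scope.

(* The supremum S(d) on the right is nondecreasing in d, so its limit at 0+ is
   its infimum over d > 0; two estimates identify this infimum with Lipusc.
   If A x <= b and (A, b) lies within rho of (Ab, bb), then
   ||(Ab x - bb)_+|| <= rho (||x|| + 1); hence a finite S(d) is an admissible
   constant on the d-neighbourhood, and Lipusc <= S(d).
   Conversely, given x, take u with ||u||_* <= 1 and u'x close to ||x||
   (finite-dimensional Hahn-Banach, obtained from the Euclidean projection onto
   the unit ball).  The rank-one perturbation (Ab - lam u', bb + lam) with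
   lam = (Ab x - bb)_+ / (u'x + 1) makes x feasible and has size close to
   ||(Ab x - bb)_+|| / (||x|| + 1); hence every admissible constant k bounds
   S(d) for small d. *)

Section LipuscFeas.
Set Implicit Arguments.
Unset Strict Implicit.
Unset Printing Implicit Defensive.
Variable R : realType.

Lemma le_of_le_mul1D (a b : R) :
  0 <= b -> (forall e, 0 < e -> e <= 1 -> a <= b * (1 + e)) -> a <= b.
Proof.
move=> b0 ab; apply/ler_addgt0Pr => e e0.
have b1 : 0 < b + 1 by rewrite ltr_wpDl.
pose e' := Num.min 1 (e / (b + 1)).
have e'0 : 0 < e' by rewrite lt_min ltr01 divr_gt0.
have e'1 : e' <= 1 by rewrite ge_min lexx.
have e'e : e' <= e / (b + 1) by rewrite ge_min lexx orbT.
apply: le_trans (ab e' e'0 e'1) _; rewrite mulrDr mulr1 lerD2l.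
apply: le_trans (ler_wpM2l b0 e'e) _.
by rewrite mulrA ler_pdivrMr // mulrC ler_wpM2l ?(ltW e0) // lerDl.
Qed.

Lemma mxBE p q (M M' : 'M[R]_(p, q)) i j : (M - M') i j = M i j - M' i j.
Proof. by rewrite !mxE. Qed.

Lemma mx_norm_coord p q (x : 'M[R]_(p, q)) i j : `|x i j| <= `|x|.
Proof.
rewrite (_ : `|x| = mx_norm x) // mx_normrE.
exact: (le_bigmax _ (fun ij => `|x ij.1 ij.2|) (i, j)).
Qed.

Lemma mx_norm_trmx p q (x : 'M[R]_(p, q)) : `|x^T| = `|x|.
Proof.
suff le_tr p' q' (y : 'M[R]_(p', q')) : `|y^T| <= `|y|.
  by apply: le_anti; rewrite le_tr /=; have := le_tr _ _ x^T; rewrite trmxK.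
rewrite (_ : `|y^T| = mx_norm y^T) // mx_normrE.
apply/bigmax_leP; split => [|[i j] _]; first exact: normr_ge0.
by rewrite mxE mx_norm_coord.
Qed.

Lemma lipschitz_continuous (V W : normedModType R) (f : V -> W) (C : R) :
  (forall x y, `|f x - f y| <= C * `|x - y|) -> continuous f.
Proof.
move=> fC x; apply/(@cvgrPdist_le _ _ _ (nbhs x) (nbhs_filter x)) => e e0.
have C1 : 0 < `|C| + 1 by rewrite ltr_wpDl.
near=> y; apply: le_trans (fC x y) _.
have xy : `|x - y| <= e / (`|C| + 1).
  by near: y; apply: cvgr_dist_le; [exact: cvg_id | rewrite divr_gt0].
apply: le_trans (ler_norm _) _; rewrite normrM normr_id.
apply: le_trans (ler_wpM2l (normr_ge0 C) xy) _.
by rewrite mulrA ler_pdivrMr // mulrC ler_wpM2l ?(ltW e0) // lerDl.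
Unshelve. all: by end_near.
Qed.

Lemma continuous_trmx p q : continuous (@trmx R p q).
Proof.
by apply: (@lipschitz_continuous _ _ _ 1) => x y; rewrite mul1r -linearB mx_norm_trmx.
Qed.

Lemma compact_cV n (A : set 'cV[R]_n) : bounded_set A -> closed A -> compact A.
Proof.
move=> bA cA; have -> : A = trmx @` [set v : 'rV[R]_n | A v^T].
  by apply/seteqP; split => [x Ax|_ [v Av <-] //]; exists x^T; rewrite /= trmxK.
apply: continuous_compact; first exact/continuous_subspaceT/continuous_trmx.
apply: bounded_closed_compact.
  move: bA; rewrite /= /bounded_near; apply: filterS => M hM v Av.
  by rewrite /= -mx_norm_trmx; exact: hM.
exact: (continuous_closedP _).1 (@continuous_trmx 1 n) A cA.
Qed.

Section EuclideanProjection.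
Variable n : nat.

Definition dotv (x y : 'cV[R]_n) : R := (x^T *m y) 0 0.

Lemma dotvE x y : dotv x y = \sum_i x i 0 * y i 0.
Proof. by rewrite /dotv mxE; apply: eq_bigr => i _; rewrite mxE. Qed.

Lemma dotvDr x y z : dotv x (y + z) = dotv x y + dotv x z.
Proof. by rewrite /dotv mulmxDr mxE. Qed.

Lemma dotvBr x y z : dotv x (y - z) = dotv x y - dotv x z.
Proof. by rewrite /dotv mulmxBr !mxE. Qed.

Lemma dotvv_ge0 x : 0 <= dotv x x.
Proof. by rewrite dotvE sumr_ge0 // => i _; rewrite -expr2 sqr_ge0. Qed.

Lemma dotvv_gt0 x : x != 0 -> 0 < dotv x x.
Proof.
move=> x0; rewrite lt_neqAle dotvv_ge0 andbT eq_sym; apply: contra x0.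
have sq_ge0 i : 0 <= x i 0 * x i 0 by rewrite -expr2 sqr_ge0.
rewrite dotvE => /eqP/psumr_eq0P x2; apply/eqP/matrixP => i j.
have /eqP := x2 (fun i _ => sq_ge0 i) i isT.
by rewrite ord1 !mxE -expr2 sqrf_eq0 => /eqP.
Qed.

Lemma continuous_dotv_sub p :
  continuous (fun c : 'cV[R]_n => dotv (p - c) (p - c)).
Proof.
have -> : (fun c => dotv (p - c) (p - c)) =
    (fun c : 'cV[R]_n => \sum_i (p i 0 - c i 0) * (p i 0 - c i 0)).
  by apply/funext => c; rewrite dotvE; apply: eq_bigr => i _; rewrite !mxE.
apply: (@continuous_big _ _ +%R 0 xpredT (@add_continuous R)) => i _.
have pci : continuous (fun c : 'cV[R]_n => p i 0 - c i 0).
  by move=> c; apply: continuousB; [exact: cst_continuous | exact: coord_continuous].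
by move=> c; exact: (@continuousM _ _ _ _ c (pci c) (pci c)).
Qed.

Lemma projection_dotv_le0 (B : set 'cV[R]_n) p cs :
    (forall c, B c -> dotv (p - cs) (p - cs) <= dotv (p - c) (p - c)) ->
    (forall c t, B c -> 0 < t <= 1 -> B (cs + t *: (c - cs))) ->
  forall c, B c -> dotv (p - cs) (c - cs) <= 0.
Proof.
move=> csmin conv c Bc; set d := c - cs; set g := dotv (p - cs) d.
have D0 := dotvv_ge0 d; set D := dotv d d in D0 *.
have gD t : 0 < t <= 1 -> 2 * g <= t * D.
  move=> t01; have := csmin _ (conv c t Bc t01).
  have -> : dotv (p - (cs + t *: d)) (p - (cs + t *: d)) =
      dotv (p - cs) (p - cs) - t * (2 * g) + t * (t * D).
    rewrite /g /D !dotvE !mulr_sumr -sumrB -big_split /=.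
    by apply: eq_bigr => i _; rewrite !mxE; ring.
  by case/andP: t01 => t0 _ h; rewrite -(ler_pM2l t0); lra.
rewrite leNgt; apply/negP => g0; have gD0 : 0 < g + D by rewrite ltr_wpDr.
have := gD (g / (g + D)).
rewrite divr_gt0 // ler_pdivrMr // mul1r lerDl D0 => /(_ isT).
rewrite mulrAC ler_pdivlMr //; nra.
Qed.

End EuclideanProjection.

Section ArbitraryNorm.
Variables (n : nat) (N : 'cV[R]_n -> R).
Hypothesis hN : is_norm N.

Lemma normv_eq0 x : N x = 0 -> x = 0.
Proof. by case: hN => + _; apply. Qed.

Lemma normvZ c x : N (c *: x) = `|c| * N x.
Proof. by case: hN => _ [+ _]; apply. Qed.

Lemma normvD x y : N (x + y) <= N x + N y.
Proof. by case: hN => _ [_]; apply. Qed.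

Lemma normv0 : N 0 = 0.
Proof. by rewrite -(scale0r 0) normvZ normr0 mul0r. Qed.

Lemma normvN x : N (- x) = N x.
Proof. by rewrite -scaleN1r normvZ normrN normr1 mul1r. Qed.

Lemma normv_ge0 x : 0 <= N x.
Proof.
have := normvD x (- x); rewrite subrr normv0 normvN.
by rewrite -mulr2n pmulrn_lge0.
Qed.

Lemma normv_gt0 x : x != 0 -> 0 < N x.
Proof.
move=> x0; rewrite lt_neqAle normv_ge0 andbT eq_sym.
by apply: contra x0 => /eqP/normv_eq0 ->.
Qed.

Lemma ler_dist_normv x y : `|N x - N y| <= N (x - y).
Proof.
have := normvD (x - y) y; have := normvD (y - x) x.
rewrite !subrK -opprB normvN => h1 h2.
by rewrite ler_norml; apply/andP; split; lra.
Qed.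

Lemma normv_le_mx_norm : exists2 C, 0 <= C & forall x, N x <= C * `|x|.
Proof.
exists (\sum_(i < n) N (delta_mx i 0)) => [|x].
  by apply: sumr_ge0 => i _; exact: normv_ge0.
have {1}-> : x = \sum_(i < n) x i 0 *: delta_mx i 0.
  by rewrite {1}(matrix_sum_delta x); apply: eq_bigr => i _; rewrite big_ord1.
rewrite mulr_suml; elim/big_rec2: _ => [|i y1 y2 _ h]; first by rewrite normv0.
apply: le_trans (normvD _ _) _.
by rewrite lerD // normvZ mulrC ler_wpM2l ?normv_ge0 ?mx_norm_coord.
Qed.

Lemma continuous_normv : continuous N.
Proof.
have [C _ hC] := normv_le_mx_norm.
apply: (@lipschitz_continuous _ _ _ C) => x y.
exact: le_trans (ler_dist_normv x y) (hC _).
Qed.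

Lemma mx_norm_le_normv : exists2 c, 0 < c & forall x, c * `|x| <= N x.
Proof.
pose S := [set x : 'cV[R]_n | `|x| = 1].
have unitS x : x != 0 -> S (`|x|^-1 *: x).
  by move=> x0; rewrite /S /= normrZ normfV normr_id mulVf ?normr_eq0.
have [[x1 Sx1]|S0] := pselect (S !=set0); last first.
  exists 1 => // x; have [->|/unitS Sx] := eqVneq x 0.
    by rewrite normr0 mulr0 normv0.
  by exfalso; apply: S0; exists (`|x|^-1 *: x).
have cS : compact S.
  apply: compact_cV.
    rewrite /= /bounded_near; near=> M => x /= ->.
    by near: M; exact: nbhs_pinfty_ge.
  have := (continuous_closedP _).1 (@norm_continuous _ 'cV[R]_n) [set 1].
  by apply; exact: closed_eq.
have [c Sc cmin] := compact_EVT_min (ex_intro _ x1 Sx1) cS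
  (continuous_subspaceT continuous_normv).
exists (N c) => [|x].
  apply: normv_gt0; apply/eqP => c0; move: Sc.
  by rewrite c0 in_setE /S /= normr0 => /esym/eqP; rewrite oner_eq0.
have [->|x0] := eqVneq x 0; first by rewrite normr0 mulr0 normv_ge0.
have := cmin _ (mem_set (unitS x x0)); rewrite normvZ normfV normr_id.
by rewrite -ler_pdivlMr ?normr_gt0 // mulrC.
Unshelve. all: by end_near.
Qed.

Lemma compact_normv_ball : compact [set x | N x <= 1].
Proof.
have [c c0 hc] := mx_norm_le_normv.
apply: compact_cV.
  rewrite /= /bounded_near; near=> M => x /= Nx.
  apply: (@le_trans _ _ c^-1).
    by rewrite -(ler_pM2l c0) mulfV ?gt_eqF // (le_trans (hc x)).
  by near: M; apply: nbhs_pinfty_ge; exact: num_real.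
have := (continuous_closedP _).1 continuous_normv [set r | r <= 1].
by apply; exact: closed_le.
Unshelve. all: by end_near.
Qed.

Lemma abs_mulmx_le_normv (u : 'rV[R]_n) a :
    (forall c, N c <= 1 -> (u *m c) 0 0 <= a) ->
  forall y, `|(u *m y) 0 0| <= a * N y.
Proof.
move=> ua y; have [->|y0] := eqVneq y 0.
  by rewrite mulmx0 mxE normr0 normv0 mulr0.
have Ny := normv_gt0 y0; pose v := (N y)^-1 *: y.
have Nv : N v = 1 by rewrite normvZ ger0_norm ?invr_ge0 ?(ltW Ny) // mulVf ?gt_eqF.
have {1}-> : y = N y *: v by rewrite scalerA mulfV ?gt_eqF // scale1r.
have uv : (u *m v) 0 0 <= a by apply: ua; rewrite Nv.
have uNv : - (u *m v) 0 0 <= a.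
  by have := ua (- v); rewrite normvN Nv lexx mulmxN mxE => /(_ isT).
rewrite -scalemxAr mxE normrM ger0_norm ?(ltW Ny) // mulrC.
by rewrite ler_wpM2r ?(ltW Ny) // ler_norml uv andbT lerNl.
Qed.

Lemma exists_norming_functional p : 1 < N p ->
  exists u : 'rV[R]_n, (forall y, `|(u *m y) 0 0| <= N y) /\ 1 < (u *m p) 0 0.
Proof.
move=> Np; pose B := [set c | N c <= 1].
have B0 : B !=set0 by exists 0; rewrite /B /= normv0.
have [cs /[!in_setE] Bcs csmin] := compact_EVT_min B0 compact_normv_ball
  (continuous_subspaceT (continuous_dotv_sub (p := p))).
(* [w] is an outer normal of the unit ball at the projection [cs] of [p]. *)
set w := p - cs; set a := dotv w cs.
have wB c : N c <= 1 -> dotv w c <= a.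
  move=> Bc; rewrite -subr_le0 -dotvBr; apply: (@projection_dotv_le0 _ B) Bc.
    by move=> c' Bc'; apply: csmin; rewrite in_setE.
  move=> c' t Bc' /andP[t0 t1]; rewrite /B /=.
  have -> : cs + t *: (c' - cs) = (1 - t) *: cs + t *: c'.
    by rewrite scalerBr scalerBl scale1r addrA addrAC.
  apply: le_trans (normvD _ _) _; rewrite !normvZ ger0_norm ?subr_ge0 //.
  by rewrite ger0_norm ?(ltW t0) //; move: Bcs Bc'; rewrite /B /=; nra.
have wy := abs_mulmx_le_normv wB.
have w0 : w != 0 by apply: contraTneq Np => /subr0_eq ->; rewrite -leNgt.
have wp : a < dotv w p.
  by rewrite -(subrK cs p) -/w dotvDr -/a ltrDr dotvv_gt0.
have a0 : 0 < a.
  rewrite ltNge; apply/negP => a0; have := ler_norm (dotv w p).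
  have := wy p; rewrite -/(dotv w p); nra.
exists (a^-1 *: w^T); split => [y|]; rewrite -scalemxAl mxE.
  by rewrite normrM ger0_norm ?invr_ge0 ?(ltW a0) // ler_pdivrMl.
by rewrite ltr_pdivlMl // mulr1.
Qed.

Lemma exists_almost_norming_functional x e : 0 < e ->
  exists u : 'rV[R]_n,
    (forall y, `|(u *m y) 0 0| <= N y) /\ N x <= (1 + e) * (u *m x) 0 0.
Proof.
move=> e0; have [x0|x0] := eqVneq x 0.
  exists 0; split => [y|]; first by rewrite mul0mx mxE normr0 normv_ge0.
  by rewrite x0 normv0 mulmx0 mxE mulr0.
have Nx := normv_gt0 x0; have e1 : 0 < 1 + e by rewrite addr_gt0.
have [|u [uN ux]] := @exists_norming_functional (((1 + e) / N x) *: x).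
  by rewrite normvZ ger0_norm ?divr_ge0 ?ltW // divfK ?gt_eqF // ltrDl.
exists u; split => //; move: ux; rewrite -scalemxAr mxE.
by rewrite mulrAC ltr_pdivlMr // mul1r => /ltW.
Qed.

Lemma abs_mulmx_le_dualnorm u x : `|(u *m x) 0 0| <= dualnorm N u * N x.
Proof.
have [c c0 hc] := mx_norm_le_normv.
have hS : has_sup [set `|(u *m y) 0 0| | y in [set y | N y <= 1]].
  split; first by exists `|(u *m (0 : 'cV_n)) 0 0|, 0 => //=; rewrite normv0.
  exists ((\sum_j `|u 0 j|) / c) => _ [y /= Ny <-].
  rewrite mxE mulr_suml; apply: le_trans (ler_norm_sum _ _ _) (ler_sum _ _) => j _.
  rewrite normrM ler_wpM2l // -(ler_pM2l c0) mulfV ?gt_eqF //.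
  rewrite (le_trans _ Ny) //; apply: (le_trans _ (hc y)).
  by rewrite ler_wpM2l ?(ltW c0) //; exact: mx_norm_coord.
apply: (abs_mulmx_le_normv (a := dualnorm N u)) => y Ny.
by apply: le_trans (ler_norm _) _; apply: sup_upper_bound => //; exists y.
Qed.

Lemma dualnorm_le u k :
  0 <= k -> (forall y, `|(u *m y) 0 0| <= k * N y) -> dualnorm N u <= k.
Proof.
move=> k0 uk; apply: ge_sup.
  by exists `|(u *m (0 : 'cV_n)) 0 0|, 0 => //=; rewrite normv0.
by move=> _ [y /= Ny <-]; rewrite (le_trans (uk y)) // ler_piMr.
Qed.

End ArbitraryNorm.

Section LinearInequalities.
Variables (m n : nat) (N : 'cV[R]_n -> R).
Hypothesis hN : is_norm N.
Implicit Types (A : 'M[R]_(m, n)) (b : 'cV[R]_m) (x : 'cV[R]_n).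

Lemma resid_ge A b x t : (A *m x - b) t 0 <= resid A b x.
Proof.
apply: le_trans (le_bigmax _ (fun t => Num.max ((A *m x - b) t 0) 0) t).
by rewrite le_max lexx.
Qed.

Lemma resid_ge0 A b x : 0 <= resid A b x.
Proof. by apply/bigmax_geP; left. Qed.

Lemma resid_le A b x c :
  0 <= c -> (forall t, (A *m x - b) t 0 <= c) -> resid A b x <= c.
Proof. by move=> c0 h; apply/bigmax_leP; split => // t _; rewrite ge_max h. Qed.

Lemma resid_le0_feas A b x : resid A b x <= 0 -> feas A b x.
Proof.
by move=> r0 t; have := le_trans (resid_ge A b x t) r0; rewrite mxBE subr_le0.
Qed.

Lemma feas_resid0 A b x : feas A b x -> resid A b x = 0.
Proof.
move=> Ax; apply/eqP; rewrite eq_le resid_ge0 andbT.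
by apply: resid_le => // t; rewrite mxBE subr_le0; exact: Ax.
Qed.

Lemma param_norm_ge0 A b : 0 <= param_norm N A b.
Proof. by apply/bigmax_geP; left. Qed.

Lemma param_norm_ge A b t :
  Num.max (dualnorm N (row t A)) `|b t 0| <= param_norm N A b.
Proof. exact: (le_bigmax _ (fun t => Num.max (dualnorm N (row t A)) `|b t 0|) t). Qed.

Lemma param_norm_le A b c : 0 <= c ->
    (forall t, dualnorm N (row t A) <= c) -> (forall t, `|b t 0| <= c) ->
  param_norm N A b <= c.
Proof.
by move=> c0 Ac bc; apply/bigmax_leP; split => // t _; rewrite ge_max Ac bc.
Qed.

Lemma distN_ge0 x (F : set 'cV[R]_n) : (0 <= distN N x F)%E.
Proof. by apply: le_ereal_inf_tmp => _ [w _ <-]; rewrite lee_fin normv_ge0. Qed.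

Lemma distN_le x (F : set 'cV[R]_n) w :
  F w -> (distN N x F <= (N (x - w))%:E)%E.
Proof. by move=> Fw; apply: ereal_inf_lbound; exists w. Qed.

Lemma distN_eq0 x (F : set 'cV[R]_n) : F x -> distN N x F = 0%E.
Proof.
move=> Fx; apply/eqP; rewrite eq_le distN_ge0 andbT.
by rewrite (le_trans (distN_le x Fx)) // subrr normv0.
Qed.

Lemma distN_EFin x (F : set 'cV[R]_n) : F !=set0 ->
  exists2 D, 0 <= D & distN N x F = D%:E.
Proof.
case=> w Fw; have := distN_ge0 x F; have := distN_le x Fw.
by case: distN => [D| |] //= _ D0; exists D.
Qed.

Variables (Ab : 'M[R]_(m, n)) (bb : 'cV[R]_m).

Lemma resid_le_param_norm A b x : feas A b x ->
  resid Ab bb x <= param_norm N (A - Ab) (b - bb) * (N x + 1).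
Proof.
move=> Ax; set rho := param_norm N (A - Ab) (b - bb).
apply: resid_le => [|t].
  by rewrite mulr_ge0 ?param_norm_ge0 ?addr_ge0 ?normv_ge0.
have := param_norm_ge (A - Ab) (b - bb) t.
rewrite ge_max -/rho mxBE => /andP[rowt bt].
have := abs_mulmx_le_dualnorm hN (row t (A - Ab)) x.
rewrite -row_mul mxE mulmxBl mxBE => dAx.
have := ler_wpM2r (normv_ge0 hN x) rowt; have := Ax t.
move: dAx bt; rewrite mxBE !ler_norml; lra.
Qed.

Lemma exists_feas_perturbation x e : 0 < e -> exists A b, feas A b x /\
  param_norm N (A - Ab) (b - bb) <= (1 + e) * (resid Ab bb x / (N x + 1)).
Proof.
move=> e0; have [u [uN ux]] := exists_almost_norming_functional hN x e0.
set r := resid Ab bb x; set s := (u *m x) 0 0 + 1.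
have Nx1 : 0 < N x + 1 by rewrite ltr_wpDl ?normv_ge0.
have e1 : 0 < 1 + e by rewrite addr_gt0.
have ux0 : 0 <= (u *m x) 0 0.
  by rewrite -(pmulr_rge0 _ e1) (le_trans (normv_ge0 hN x)).
have s0 : 0 < s by rewrite ltr_wpDl.
have Nxs : N x + 1 <= (1 + e) * s by rewrite mulrDr mulr1 lerD // lerDl ltW.
(* [lam t 0 * s] is exactly the violation of the [t]-th inequality at [x]. *)
pose lam : 'cV[R]_m := \col_t (Num.max ((Ab *m x - bb) t 0) 0 / s).
have lam_ge0 t : 0 <= lam t 0.
  by rewrite mxE divr_ge0 ?le_max ?lexx ?orbT ?(ltW s0).
have lam_le t : lam t 0 <= r / s.
  by rewrite mxE ler_wpM2r ?invr_ge0 ?(ltW s0) // ge_max resid_ge resid_ge0.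
have lam_u y t : (lam *m u *m y) t 0 = lam t 0 * (u *m y) 0 0.
  by rewrite -mulmxA [LHS]mxE big_ord1.
exists (Ab - lam *m u), (bb + lam); split.
  move=> t; rewrite mulmxBl mxBE lam_u [(bb + lam) t 0]mxE.
  have : (Ab *m x - bb) t 0 <= lam t 0 * s.
    by rewrite [lam t 0]mxE divfK ?gt_eqF // le_max lexx.
  rewrite mxBE /s mulrDr mulr1; lra.
rewrite addrAC subrr add0r addrAC subrr add0r.
apply: (@le_trans _ _ (r / s)).
  apply: param_norm_le => [|t|t]; first by rewrite divr_ge0 ?resid_ge0 ?ltW.
    apply: le_trans (lam_le t); apply: dualnorm_le => // y.
    by rewrite -row_mul mxE mulNmx mxE lam_u normrN normrM ger0_norm // ler_wpM2l.
  by rewrite ger0_norm.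
rewrite mulrA ler_pdivlMr // mulrAC ler_pdivrMr // [(1 + e) * r]mulrC -mulrA.
by rewrite ler_wpM2l ?resid_ge0.
Qed.

Definition lipusc_const (k eps : R) : Prop :=
  forall A b, param_norm N (A - Ab) (b - bb) < eps ->
  forall x, feas A b x ->
  (distN N x (feas Ab bb) <= (k * param_norm N (A - Ab) (b - bb))%:E)%E.

Lemma nondecreasing_rhs_sup : nondecreasing_fun (rhs_sup N Ab bb).
Proof.
move=> d d' dd'; apply/ereal_sup_le/image_subset => x /= /le_trans; apply.
by rewrite ler_wpM2r // addr_ge0 ?normv_ge0.
Qed.

Hypothesis hne : feas Ab bb !=set0.

Lemma rhs_sup_ge0 d : 0 <= d -> (0 <= rhs_sup N Ab bb d)%E.
Proof.
case: hne => w Fw d0; apply: ereal_sup_ubound; exists w.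
  by rewrite /= feas_resid0 // mulr_ge0 // addr_ge0 ?normv_ge0.
by rewrite /equot feas_resid0 // eqxx.
Qed.

Lemma Lipusc_le_rhs_sup d :
  0 < d -> (Lipusc_feas N Ab bb <= rhs_sup N Ab bb d)%E.
Proof.
move=> d0; have := rhs_sup_ge0 (ltW d0).
case E : rhs_sup => [s| |] //; last by rewrite leey => _; rewrite leey.
rewrite lee_fin => s0; apply: ereal_inf_lbound; exists s => //; split => //.
exists d => // A b; set rho := param_norm _ _ _ => rho_d x Ax.
have [D D0 DE] := distN_EFin x hne; rewrite DE lee_fin.
have [r0|r0] := leP (resid Ab bb x) 0.
  suff -> : D = 0 by rewrite mulr_ge0 ?param_norm_ge0.
  by apply: EFin_inj; rewrite -DE distN_eq0 //; exact: resid_le0_feas.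
have Nx1 : 0 < N x + 1 by rewrite ltr_wpDl ?normv_ge0.
have r_rho := resid_le_param_norm Ax; rewrite -/rho in r_rho.
have : (equot ((N x + 1)%:E * distN N x (feas Ab bb)) (resid Ab bb x)
          <= s%:E)%E.
  rewrite -E; apply: ereal_sup_ubound; exists x => //=.
  by apply: le_trans r_rho _; rewrite ler_wpM2r ?ltW.
rewrite /equot gt_eqF // DE -!EFinM lee_fin ler_pdivrMr // => Ds.
by rewrite -(ler_pM2l Nx1) (le_trans Ds) // mulrCA ler_wpM2l // mulrC.
Qed.

Lemma rhs_sup_le_lipusc_const k eps : 0 <= k -> lipusc_const k eps ->
  forall d, 0 < d -> d < eps / 2 -> (rhs_sup N Ab bb d <= k%:E)%E.
Proof.
move=> k0 hk d d0 d_eps; apply: ge_ereal_sup => _ [x /= xd <-].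
set r := resid Ab bb x; rewrite /equot; case: eqP => [_|/eqP r0].
  by rewrite lee_fin.
have {r0}r0 : 0 < r by rewrite lt_neqAle eq_sym r0 resid_ge0.
have Nx1 : 0 < N x + 1 by rewrite ltr_wpDl ?normv_ge0.
have [D D0 DE] := distN_EFin x hne.
suff Dk : D <= k * (r / (N x + 1)).
  by rewrite DE -!EFinM lee_fin ler_pdivrMr // mulrC -ler_pdivlMr // -mulrA.
apply: le_of_le_mul1D => [|e e0 e1].
  by rewrite mulr_ge0 // divr_ge0 // ltW.
have [A [b [Ax rho_le]]] := exists_feas_perturbation x e0.
have rho_eps : param_norm N (A - Ab) (b - bb) < eps.
  apply: le_lt_trans rho_le _; rewrite -/r.
  have : r / (N x + 1) <= d by rewrite ler_pdivrMr.
  move=> rd; nra.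
have := hk A b rho_eps x Ax; rewrite DE lee_fin => /le_trans; apply.
by rewrite -mulrA [_ * (1 + e)]mulrC ler_wpM2l.
Qed.

End LinearInequalities.
End LipuscFeas.

Theorem proposition1 (R : realType) (m n : nat) (N : 'cV[R]_n -> R)
  (hN : is_norm N) (Ab : 'M[R]_(m, n)) (bb : 'cV[R]_m)
  (hne : feas Ab bb !=set0) :
  rhs_sup N Ab bb d @[d --> 0^'+] --> Lipusc_feas N Ab bb.
Proof.
have -> : Lipusc_feas N Ab bb = ereal_inf (rhs_sup N Ab bb @` `]0, +oo[).
  apply/eqP; rewrite eq_le; apply/andP; split.
    apply: le_ereal_inf_tmp => _ [d /[!set_itvE] d0 <-].
    exact: Lipusc_le_rhs_sup.
  apply: le_ereal_inf_tmp => _ [k [k0 [eps eps0 hk]] <-].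
  have d0 : 0 < eps / 4 by rewrite divr_gt0.
  apply: le_trans (rhs_sup_le_lipusc_const hN hne k0 hk d0 _); last by lra.
  by apply: ereal_inf_lbound; exists (eps / 4); rewrite // set_itvE.
apply: nondecreasing_at_right_cvge => // d d' _ _.
exact: nondecreasing_rhs_sup.
Qed.
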